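(* Let $\mathbf K\in\mathbb R^{n\times d}$ have rows $\mathbf k_1,\dots,\mathbf k_n$, let $R_{\mathbf K}=\|\mathbf K\|_{2,\infty}>0$, $\beta>0$, $\tau>0$. Let $\mathbf H_\tau=\big(\exp(\tfrac{\beta}{\tau^2}\langle\mathbf k_i,\mathbf k_l\rangle)\big)_{i,l\in[n]}$ and, for $s\in\{0,1,2,\dots\}$, $\mathbf T^s_{il}=\sum_{p=0}^s\frac{1}{p!}\big(\tfrac{\beta}{\tau^2}\langle\mathbf k_i,\mathbf k_l\rangle\big)^p$. For $\varepsilon>0$ define $$\tilde s(\varepsilon)\defeq\frac{\log(n/\varepsilon)+\beta R_{\mathbf K}^2/\tau^2}{W_0\!\left(\frac{\log(n/\varepsilon)\,\tau^2}{e\beta R_{\mathbf K}^2}+\frac1e\right)}.$$ Then $\|\mathbf H_\tau-\mathbf T^s\|_*\le\varepsilon$ for all integers $s\ge\lfloor\tilde s(\varepsilon)\rfloor$.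
   Context: $W_0$ is the principal branch of the Lambert W function ($w=W_0(z)$ is the unique solution $w>-1$ of $we^w=z$ for $z>-1/e$). $\|\mathbf K\|_{2,\infty}$ is the maximal Euclidean row norm, and $\|\cdot\|_*$ the nuclear norm. *)

From mathcomp Require Import all_boot all_order all_algebra.
From mathcomp Require Import polyrcf.
From mathcomp Require Import boolp classical_sets reals.
From mathcomp.analysis Require Import sequences exp.
Set Implicit Arguments. Unset Strict Implicit. Unset Printing Implicit Defensive.
Import Order.TTheory GRing.Theory Num.Theory.
Local Open Scope ring_scope.

(* Principal branch of the Lambert W function: for z > -1/e, W0 z is the
   unique w > -1 with w * e^w = z.  (Outside that domain the value is an
   arbitrary default; it is never used there.) *)
Definition LambertW0 (R : realType) (z : R) : R :=
  xget 0 [set w : R | -1 < w /\ w * expR w = z].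

Definition row_dot (R : realType) n d (K : 'M[R]_(n, d)) (i l : 'I_n) : R :=
  \sum_(j < d) K i j * K l j.

Definition norm_2inf (R : realType) n d (K : 'M[R]_(n, d)) : R :=
  \big[Num.max/0]_(i < n) Num.sqrt (\sum_(j < d) K i j ^+ 2).

(* Nuclear norm ||A||_* = sum of the singular values of A, i.e. the sum of the
   square roots of the eigenvalues (with algebraic multiplicity) of A^T A,
   which are the real roots of its characteristic polynomial. *)
Definition nuclear_norm (R : realType) m (A : 'M[R]_m) : R :=
  let p := char_poly (A^T *m A) in
  \sum_(x <- rootsR p) (mup x p)%:R * Num.sqrt x.

Definition Hmx (R : realType) n d (K : 'M[R]_(n, d)) (beta tau : R) : 'M[R]_n :=
  \matrix_(i, l) expR (beta / tau ^+ 2 * row_dot K i l).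

Definition Tmx (R : realType) n d (K : 'M[R]_(n, d)) (beta tau : R) (s : nat)
  : 'M[R]_n :=
  \matrix_(i, l) \sum_(p < s.+1) (beta / tau ^+ 2 * row_dot K i l) ^+ p / (p`!)%:R.

Definition s_tilde (R : realType) n d (K : 'M[R]_(n, d)) (beta tau eps : R) : R :=
  let RK := norm_2inf K in
  (ln (n%:R / eps) + beta * RK ^+ 2 / tau ^+ 2) /
  LambertW0 (ln (n%:R / eps) * tau ^+ 2 / (expR 1 * beta * RK ^+ 2) + (expR 1)^-1).

(* The error [H - T^s] is the entrywise exponential tail
   [sum_(k > s) (c <k_i, k_l>)^k / k!] with [c = beta / tau^2].  Hadamard
   powers of a Gram matrix are positive semidefinite, so the tail is a limit
   of nonnegative combinations of PSD matrices, hence PSD, and its nuclear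
   norm is its trace.  Each diagonal entry is at most the tail at
   [x = c R_K^2], which is at most [x^m/m! e^x <= (e x/m)^m e^x] with
   [m = s + 1]; since [w = W_0((L + x)/(e x))] satisfies [e x = (L + x)/w e^-w]
   and [m w > L + x] for [L = log (n/eps)], this is at most [eps/n]. *)

From mathcomp Require Import all_boot all_order all_algebra.
From mathcomp Require Import polyrcf complex spectral.
From mathcomp Require Import boolp classical_sets reals topology normedtype sequences exp.
From mathcomp Require Import ring lra.
Set Implicit Arguments.
Unset Strict Implicit.
Unset Printing Implicit Defensive.
Import Order.TTheory GRing.Theory Num.Theory numFieldNormedType.Exports.
Local Open Scope classical_set_scope.
Local Open Scope ring_scope.

Lemma char_poly_similar (F : fieldType) n (P A : 'M[F]_n) : P \in unitmx ->
  char_poly (invmx P *m A *m P) = char_poly A.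
Proof.
move=> uP; rewrite /char_poly.
have -> : char_poly_mx (invmx P *m A *m P) =
    map_mx polyC (invmx P) *m char_poly_mx A *m map_mx polyC P.
  rewrite /char_poly_mx mulmxBr mulmxBl !map_mxM -(mulmxA _ _%:M) mul_scalar_mx.
  by rewrite -scalemxAr -[X in 'X *: X]map_mxM mulVmx // map_mx1 scalemx1.
rewrite !det_mulmx !det_map_mx mulrC mulrA -rmorphM -det_mulmx mulmxV //.
by rewrite det1 rmorph1 mul1r.
Qed.

Lemma mxtrace_char_poly_split (R : comNzRingType) n (A : 'M[R]_n) (d : 'I_n -> R) :
  char_poly A = \prod_i ('X - (d i)%:P) -> \tr A = \sum_i d i.
Proof.
case: n A d => [|n] A d cA; first by rewrite /mxtrace !big_ord0.
set s := [seq d i | i <- enum 'I_n.+1].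
have prodE : \prod_i ('X - (d i)%:P) = \prod_(y <- s) ('X - y%:P).
  by rewrite big_map big_enum.
have size_s : size s = n.+1 by rewrite size_map size_enum_ord.
apply: oppr_inj; rewrite -char_poly_trace // cA prodE -[in LHS]size_s.
by rewrite coefPn_prod_XsubC ?size_s // big_map big_enum.
Qed.

(* Diagonalize over [R[i]], where symmetric real matrices are hermitian. *)
Lemma symmetric_char_poly_split (R : rcfType) n (A : 'M[R]_n) : A^T = A ->
  exists d : 'I_n -> R, char_poly A = \prod_i ('X - (d i)%:P) /\
    char_poly (A *m A) = \prod_i ('X - (d i ^+ 2)%:P).
Proof.
move=> Asym; pose f := @real_complex R; pose Ac := map_mx f A.
have Ac_herm : Ac \is hermsymmx.
  apply: realsym_hermsym.
    apply/is_hermitianmxP; rewrite expr0 scale1r.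
    by apply/matrixP => i j; rewrite !mxE -[in LHS]Asym mxE.
  by apply/mxOverP => i j; rewrite mxE; apply/complex_realP; exists (A i j).
have /orthomx_spectralP AcE := hermitian_normalmx Ac_herm.
have /mxOverP Dreal := hermitian_spectral_diag_real Ac_herm.
set P := spectralmx Ac in AcE; set D := spectral_diag Ac in AcE Dreal.
have uP : P \in unitmx by apply: spectral_unit.
pose d i := complex.Re (D 0 i).
have Dd i : D 0 i = f (d i) by rewrite /d /f RRe_real // Dreal.
exists d; split; apply: (map_poly_inj f); rewrite map_char_poly.
  rewrite -/Ac AcE char_poly_similar // char_poly_trig ?diag_mx_is_trig //.
  by rewrite map_prod_XsubC; apply: eq_bigr => i _; rewrite mxE eqxx mulr1n Dd.
rewrite map_mxM -/Ac AcE -!mulmxA (mulmxA P) mulmxV // mul1mx.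
rewrite (mulmxA (diag_mx D)) mulmx_diag mulmxA char_poly_similar //.
rewrite char_poly_trig ?diag_mx_is_trig // map_prod_XsubC.
by apply: eq_bigr => i _; rewrite !mxE eqxx mulr1n Dd rmorphXn expr2.
Qed.

Lemma sum_rootsR_prod_XsubC (R : rcfType) (s : seq R) (G : R -> R) :
  let p := \prod_(y <- s) ('X - y%:P) in
  \sum_(x <- rootsR p) (mup x p)%:R * G x = \sum_(y <- s) G y.
Proof.
move=> p; have p_neq0 : p != 0 by rewrite monic_neq0 ?monic_prod_XsubC.
have rootsR_undup : perm_eq (rootsR p) (undup s).
  apply: uniq_perm; [exact: uniq_roots | exact: undup_uniq |] => x.
  by rewrite mem_undup -(roots_on_rootsR p_neq0) in_itv /= root_prod_XsubC.
rewrite (perm_big _ rootsR_undup) /= -[RHS]big_undup_iterop_count.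
apply: eq_bigr => x _; rewrite mu_prod_XsubC Monoid.iteropE.
by elim: (count_mem x s) => [|k IHk] /=; rewrite ?mul0r // -IHk mulrS mulrDl mul1r.
Qed.

Definition psdmx {R : numDomainType} {n} (A : 'M[R]_n) :=
  forall u : 'rV_n, 0 <= (u *m A *m u^T) 0 0.

Lemma quadformE (R : comNzRingType) n (A : 'M[R]_n) (u : 'rV_n) :
  (u *m A *m u^T) 0 0 = \sum_i \sum_l u 0 i * u 0 l * A i l.
Proof.
rewrite mxE; under eq_bigr => l _ do rewrite !mxE mulr_suml.
rewrite exchange_big; apply: eq_bigr => i _; apply: eq_bigr => l _.
by rewrite mulrAC.
Qed.

Lemma psdmx_eigenvalue_ge0 (R : realFieldType) n (A : 'M[R]_n) a :
  psdmx A -> eigenvalue A a -> 0 <= a.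
Proof.
move=> Apsd /eigenvalueP [v vA v_neq0].
suff vv_gt0 : 0 < (v *m v^T) 0 0.
  by have := Apsd v; rewrite vA -scalemxAl mxE pmulr_lge0.
have sq_ge0 j : 0 <= v 0 j * v^T j 0 by rewrite mxE -expr2 sqr_ge0.
rewrite mxE lt0r sumr_ge0 // andbT.
apply: contra v_neq0 => /eqP vv0; apply/eqP/rowP => j.
have /(_ j isT) := psumr_eq0P (fun k _ => sq_ge0 k) vv0.
by rewrite !mxE => /eqP; rewrite mulf_eq0 orbb => /eqP.
Qed.

Lemma nuclear_norm_psd (R : realType) n (A : 'M[R]_n) :
  A^T = A -> psdmx A -> nuclear_norm A = \tr A.
Proof.
move=> Asym Apsd; have [d [cA cAA]] := symmetric_char_poly_split Asym.
have d_ge0 i : 0 <= d i.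
  apply: psdmx_eigenvalue_ge0 Apsd _.
  by rewrite eigenvalue_root_char cA /root horner_prod (bigD1 i) //= hornerXsubC subrr mul0r.
rewrite /nuclear_norm /= Asym cAA (mxtrace_char_poly_split cA).
rewrite -(big_map (fun i => d i ^+ 2) predT (fun y => 'X - y%:P)).
rewrite sum_rootsR_prod_XsubC big_map.
by apply: eq_bigr => i _; rewrite sqrtr_sqr ger0_norm.
Qed.

Lemma fact_mul_leq m j : (m`! * j`! <= (m + j)`!)%N.
Proof.
have := bin_fact (leq_addr j m); rewrite addKn => <-.
by apply: leq_pmull; rewrite bin_gt0 leq_addr.
Qed.

Lemma exp_coeffD_le (R : realType) (y : R) m j : 0 <= y ->
  exp_coeff y (m + j)%N <= exp_coeff y m * exp_coeff y j.
Proof.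
move=> y0; rewrite /exp_coeff /= exprD mulrACA -invfM ler_wpM2l ?mulr_ge0 ?exprn_ge0 //.
by rewrite lef_pV2 ?posrE ?mulr_gt0 ?ltr0n ?fact_gt0 // -natrM ler_nat fact_mul_leq.
Qed.

Lemma series_exp_coeff_le_expR (R : realType) (y : R) N : 0 <= y ->
  series (exp_coeff y) N <= expR y.
Proof.
move=> y0; apply: nondecreasing_cvgn_le; last exact: is_cvg_series_exp_coeff.
by apply: nondecreasing_series => k _ _; rewrite /exp_coeff /= divr_ge0 ?exprn_ge0.
Qed.

Lemma cvg_series_exp_coeff_sub (R : realType) (y : R) m :
  series (exp_coeff y) N - series (exp_coeff y) m @[N --> \oo] -->
  expR y - series (exp_coeff y) m.
Proof. exact: cvgB (is_cvg_series_exp_coeff y) (cvg_cst _). Qed.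

Lemma expR_sub_series_le (R : realType) (y : R) m : 0 <= y ->
  expR y - series (exp_coeff y) m <= exp_coeff y m * expR y.
Proof.
move=> y0; have tail_cvg := @cvg_series_exp_coeff_sub R y m.
rewrite -(cvg_lim _ tail_cvg) //; apply: limr_le; first exact: cvgP tail_cvg.
near=> N; have mN : (m <= N)%N by near: N; apply: nbhs_infty_ge.
rewrite sub_series_geq // -{1}[m]add0n big_addn.
apply: (@le_trans _ _ (exp_coeff y m * series (exp_coeff y) (N - m)%N)).
  rewrite /series /= mulr_sumr; apply: ler_sum => j _.
  by rewrite addnC exp_coeffD_le.
rewrite ler_wpM2l ?series_exp_coeff_le_expR //.
by rewrite /exp_coeff /= divr_ge0 ?exprn_ge0.
Unshelve. all: by end_near.
Qed.

Lemma psdmx_sum (R : realFieldType) n I (r : seq I) (P : pred I)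
    (c : I -> R) (A : I -> 'M[R]_n) :
  (forall i, P i -> 0 <= c i) -> (forall i, P i -> psdmx (A i)) ->
  psdmx (\sum_(i <- r | P i) c i *: A i).
Proof.
move=> c_ge0 A_psd u; rewrite mulmx_sumr mulmx_suml summxE.
apply: sumr_ge0 => i Pi; rewrite -scalemxAr -scalemxAl mxE.
by rewrite mulr_ge0 ?c_ge0 ?A_psd.
Qed.

Lemma psdmx_cvg (R : realType) n (A_ : nat -> 'M[R]_n) (A : 'M[R]_n) :
  (forall i l, A_ N i l @[N --> \oo] --> A i l) ->
  (\forall N \near \oo, psdmx (A_ N)) -> psdmx A.
Proof.
move=> A_cvg A_psd u.
have quad_cvg : (u *m A_ N *m u^T) 0 0 @[N --> \oo] --> (u *m A *m u^T) 0 0.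
  under eq_fun => N do rewrite quadformE.
  rewrite quadformE; apply: cvg_big => [|i _]; first exact: add_continuous.
  apply: cvg_big => [|l _]; first exact: add_continuous.
  exact: cvgM (cvg_cst _) (A_cvg i l).
rewrite -(cvg_lim _ quad_cvg) //; apply: limr_ge; first exact: cvgP quad_cvg.
by apply: filterS A_psd => N /(_ u).
Qed.

Definition gram_powmx (R : realType) n d (K : 'M[R]_(n, d)) p : 'M[R]_n :=
  \matrix_(i, l) row_dot K i l ^+ p.

(* Expanding [<k_i, k_l>^p] over the [d^p] index tuples exhibits the
   [p]-th Hadamard power of the Gram matrix as a sum of rank-one squares. *)
Lemma gram_powmx_psd (R : realType) n d (K : 'M[R]_(n, d)) p :
  psdmx (gram_powmx K p).
Proof.
move=> u; pose P i (f : {ffun 'I_p -> 'I_d}) := \prod_t K i (f t).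
have row_dotX i l : row_dot K i l ^+ p = \sum_f P i f * P l f.
  rewrite -[p in LHS]card_ord -prodr_const /row_dot bigA_distr_bigA /=.
  by apply: eq_bigr => f _; rewrite -big_split.
rewrite quadformE.
under eq_bigr => i _ do under eq_bigr => l _ do rewrite mxE row_dotX mulr_sumr.
under eq_bigr => i _ do rewrite exchange_big.
rewrite exchange_big /=; apply: sumr_ge0 => f _.
have -> : \sum_i \sum_l u 0 i * u 0 l * (P i f * P l f) = (\sum_i u 0 i * P i f) ^+ 2.
  rewrite expr2 mulr_suml; apply: eq_bigr => i _; rewrite mulr_sumr.
  by apply: eq_bigr => l _; ring.
exact: sqr_ge0.
Qed.

Lemma row_dotC (R : realType) n d (K : 'M[R]_(n, d)) i l :
  row_dot K i l = row_dot K l i.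
Proof. by apply: eq_bigr => j _; rewrite mulrC. Qed.

Lemma HmxBTmxE (R : realType) n d (K : 'M[R]_(n, d)) beta tau s i l :
  let y := beta / tau ^+ 2 * row_dot K i l in
  (Hmx K beta tau - Tmx K beta tau s) i l = expR y - series (exp_coeff y) s.+1.
Proof. by rewrite !mxE /series /= big_mkord. Qed.

Lemma HmxBTmx_sym (R : realType) n d (K : 'M[R]_(n, d)) beta tau s :
  (Hmx K beta tau - Tmx K beta tau s)^T = Hmx K beta tau - Tmx K beta tau s.
Proof. by apply/matrixP => i l; rewrite mxE !HmxBTmxE row_dotC. Qed.

(* [H - T^s] is the entrywise limit of the truncations
   [sum_(s < k < N) c^k/k! (<k_i, k_l>^k)_il] of the exponential series. *)
Lemma HmxBTmx_psd (R : realType) n d (K : 'M[R]_(n, d)) beta tau s :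
  0 <= beta / tau ^+ 2 -> psdmx (Hmx K beta tau - Tmx K beta tau s).
Proof.
set c := beta / tau ^+ 2 => c_ge0; pose y i l := c * row_dot K i l.
pose A_ N : 'M[R]_n := \matrix_(i, l)
  (series (exp_coeff (y i l)) N - series (exp_coeff (y i l)) s.+1).
apply: (@psdmx_cvg _ _ A_) => [i l|].
  by rewrite HmxBTmxE; under eq_fun => N do rewrite mxE; apply: cvg_series_exp_coeff_sub.
near=> N; have sN : (s.+1 <= N)%N by near: N; apply: nbhs_infty_ge.
have -> : A_ N = \sum_(s.+1 <= k < N) (c ^+ k / k`!%:R) *: gram_powmx K k.
  apply/matrixP => i l; rewrite mxE sub_series_geq // summxE.
  by apply: eq_bigr => k _; rewrite !mxE /exp_coeff /= exprMn mulrAC.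
apply: psdmx_sum => k _; last exact: gram_powmx_psd.
by rewrite divr_ge0 ?exprn_ge0.
Unshelve. all: by end_near.
Qed.

Lemma LambertW0_spec (R : realType) (z : R) : 0 < z ->
  0 < LambertW0 z /\ LambertW0 z * expR (LambertW0 z) = z.
Proof.
move=> z_gt0.
have [w w01 wE] : exists2 w, w \in `[0, z] & w * expR w = z.
  apply: IVT; first exact: ltW.
    apply: continuous_subspaceT => w.
    exact: continuousM cvg_id (@continuous_expR R w).
  by rewrite mul0r ge_min le_max (ltW z_gt0) ler_peMr ?orbT // ?ltW // expR_gt1.
move: w01; rewrite in_itv /= => /andP[w_ge0 _].
have /(xgetPex 0) [_ WE] : exists w : R, -1 < w /\ w * expR w = z.
  by exists w; rewrite (lt_le_trans _ w_ge0) ?ltrN10.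
split; last exact: WE.
by have := z_gt0; rewrite -[in X in X -> _]WE pmulr_lgt0 ?expR_gt0.
Qed.

Lemma exprn_div_fact_le (R : realType) (x : R) t : 0 <= x -> (0 < t)%N ->
  x ^+ t / t`!%:R <= (expR 1 * x / t%:R) ^+ t.
Proof.
case: t => // t x_ge0 _; set t1 := t.+1.
have t1_gt0 : 0 < t1%:R :> R by rewrite ltr0n.
have nat_pow_le : t1%:R ^+ t1 / t1`!%:R <= expR 1 ^+ t1 :> R.
  rewrite -expRM_natl mulr1; apply: le_trans (expR_ge1Dxn t (ler0n _ _)).
  by rewrite lerDr.
have -> : x ^+ t1 / t1`!%:R = (x / t1%:R) ^+ t1 * (t1%:R ^+ t1 / t1`!%:R).
  by rewrite expr_div_n; field; rewrite expf_neq0 ?gt_eqF ?ltr0n ?fact_gt0.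
have -> : (expR 1 * x / t1%:R) ^+ t1 = (x / t1%:R) ^+ t1 * expR 1 ^+ t1.
  by rewrite -exprMn; congr (_ ^+ _); ring.
by rewrite ler_wpM2l // exprn_ge0 // divr_ge0 // ltW.
Qed.

Lemma exp_coeff_expR_le_LambertW (R : realType) (L x w : R) m :
  0 < x -> 0 < w -> w * expR w = (L + x) / (expR 1 * x) -> (L + x) / w < m%:R ->
  exp_coeff x m * expR x <= expR (- L).
Proof.
move=> x_gt0 w_gt0 wE Lx_lt.
have ex_gt0 : 0 < expR 1 * x by rewrite mulr_gt0 ?expR_gt0.
have LxE : L + x = w * expR w * (expR 1 * x) by rewrite wE divfK ?gt_eqF.
have m_gt0 : (0 < m)%N.
  rewrite -(ltr0n R); apply: lt_trans Lx_lt.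
  by rewrite LxE divr_gt0 ?mulr_gt0 ?expR_gt0.
have exE : expR 1 * x = (L + x) / w * expR (- w).
  by rewrite LxE expRN; field; rewrite !gt_eqF ?expR_gt0.
have base_le : expR 1 * x / m%:R <= expR (- w).
  rewrite exE mulrAC ler_piMl ?expR_ge0 // ler_pdivrMr ?ltr0n // mul1r.
  exact: ltW.
apply: le_trans (ler_wpM2r (expR_ge0 x) (exprn_div_fact_le (ltW x_gt0) m_gt0)) _.
have base_ge0 : 0 <= expR 1 * x / m%:R by apply/ltW/divr_gt0; rewrite ?ltr0n.
apply: le_trans (ler_wpM2r (expR_ge0 x) (lerXn2r m base_ge0 (expR_ge0 _) base_le)) _.
rewrite -expRM_natl -expRD ler_expR mulrN.
by move: Lx_lt; rewrite ltr_pdivrMr // mulrC; lra.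
Qed.

Lemma exp_tail_le_LambertW0 (R : realType) (nn eps x y : R) m :
  0 < nn -> 0 < eps -> 0 < x -> 0 <= y <= x ->
  (ln (nn / eps) + x) / LambertW0 ((ln (nn / eps) + x) / (expR 1 * x)) < m%:R ->
  nn * (expR y - series (exp_coeff y) m) <= eps.
Proof.
move=> nn_gt0 eps_gt0 x_gt0 /andP[y_ge0 y_le_x]; set L := ln (nn / eps) => m_big.
have epsE : eps = nn * expR (- L).
  by rewrite expRN lnK ?posrE ?divr_gt0 // invf_div mulrC divfK ?gt_eqF.
rewrite [leRHS]epsE ler_pM2l //.
have [Lx_le0 | Lx_gt0] := leP (L + x) 0.
  have series_ge0 : 0 <= series (exp_coeff y) m.
    by apply: sumr_ge0 => k _; rewrite /exp_coeff /= divr_ge0 ?exprn_ge0.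
  rewrite -[leRHS]subr0 lerB // ler_expR; lra.
have z_gt0 : 0 < (L + x) / (expR 1 * x) by rewrite divr_gt0 ?mulr_gt0 ?expR_gt0.
have [w_gt0 wE] := LambertW0_spec z_gt0.
apply: le_trans (exp_coeff_expR_le_LambertW x_gt0 w_gt0 wE m_big).
apply: le_trans (expR_sub_series_le m y_ge0) _.
rewrite ler_pM ?divr_ge0 ?exprn_ge0 ?expR_ge0 ?ler_expR //.
by rewrite /exp_coeff /= ler_wpM2r ?invr_ge0 ?ler0n // lerXn2r // nnegrE ltW.
Qed.

Lemma s_tildeE (R : realType) n d (K : 'M[R]_(n, d)) beta tau eps :
  0 < beta -> 0 < tau -> 0 < norm_2inf K ->
  let x := beta / tau ^+ 2 * norm_2inf K ^+ 2 in
  let L := ln (n%:R / eps) in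
  s_tilde K beta tau eps = (L + x) / LambertW0 ((L + x) / (expR 1 * x)).
Proof.
move=> beta_gt0 tau_gt0 RK_gt0 x L; rewrite /s_tilde /x /L.
move: (lt0r_neq0 beta_gt0) (lt0r_neq0 tau_gt0) (lt0r_neq0 RK_gt0) => b0 t0 R0.
congr (_ / _); first by congr (_ + _); field.
by congr (LambertW0 _); field; rewrite t0 R0 b0 lt0r_neq0 ?expR_gt0.
Qed.

Lemma row_dot_diag_le (R : realType) n d (K : 'M[R]_(n, d)) i :
  0 <= row_dot K i i <= norm_2inf K ^+ 2.
Proof.
have dotE : row_dot K i i = \sum_(j < d) K i j ^+ 2.
  by apply: eq_bigr => j _; rewrite expr2.
have dot_ge0 : 0 <= row_dot K i i by rewrite dotE sumr_ge0 // => j _; rewrite sqr_ge0.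
have sqrt_le : Num.sqrt (row_dot K i i) <= norm_2inf K.
  by rewrite dotE; exact: (le_bigmax _ (fun i => Num.sqrt (\sum_(j < d) K i j ^+ 2))).
rewrite dot_ge0 -(sqr_sqrtr dot_ge0) lerXn2r ?nnegrE ?sqrtr_ge0 //.
exact: le_trans (sqrtr_ge0 _) sqrt_le.
Qed.

Lemma norm_2inf_gt0_dim (R : realType) n d (K : 'M[R]_(n, d)) :
  0 < norm_2inf K -> (0 < n)%N.
Proof. by case: n K => [K|//]; rewrite /norm_2inf big_ord0 ltxx. Qed.

Lemma floor_le_nat_lt (R : realType) (r : R) (s : nat) :
  (Num.floor r <= s%:Z)%R -> r < s.+1%:R.
Proof. by rewrite -ltzD1 floor_lt_int -PoszD addn1. Qed.

Theorem lemma3 (R : realType) (n d : nat) (K : 'M[R]_(n, d)) (beta tau : R) :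
  0 < norm_2inf K -> 0 < beta -> 0 < tau ->
  forall eps : R, 0 < eps ->
  forall s : nat, (Num.floor (s_tilde K beta tau eps) <= s%:Z)%R ->
    nuclear_norm (Hmx K beta tau - Tmx K beta tau s) <= eps.
Proof.
move=> RK_gt0 beta_gt0 tau_gt0 eps eps_gt0 s s_big.
have c_gt0 : 0 < beta / tau ^+ 2 by rewrite divr_gt0 ?exprn_gt0.
have n_gt0 : 0 < n%:R :> R by rewrite ltr0n (norm_2inf_gt0_dim RK_gt0).
set x := beta / tau ^+ 2 * norm_2inf K ^+ 2.
have x_gt0 : 0 < x by rewrite mulr_gt0 ?exprn_gt0.
rewrite nuclear_norm_psd ?HmxBTmx_sym //; last exact: HmxBTmx_psd (ltW c_gt0).
have -> : eps = \sum_(i < n) eps / n%:R.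
  by rewrite sumr_const card_ord -(mulr_natr (eps / n%:R)) divfK ?gt_eqF.
apply: ler_sum => i _; rewrite HmxBTmxE ler_pdivlMr // mulrC.
apply: (exp_tail_le_LambertW0 (x := x)) => //; last by rewrite -s_tildeE // floor_le_nat_lt.
have /andP[dot_ge0 dot_le] := row_dot_diag_le K i.
by rewrite mulr_ge0 ?ler_wpM2l // ltW.
Qed.
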